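(* Consider a storage system for two files $a$ and $b$ consisting of $C\ge0$ coded nodes and no systematic nodes, each node with service rate $\mu>0$, in which any two distinct coded nodes together can recover file $a$ and can recover file $b$. If $C>1$, the service capacity region is the region bounded by $\lambda_a=0$, $\lambda_b=0$ and $\lambda_b=\frac{C}{2}\mu-\lambda_a$, i.e. $\{(\lambda_a,\lambda_b)\in\mathbb{R}_{\ge0}^2:\lambda_a+\lambda_b\le\frac{C}{2}\mu\}$. If $C\le1$, the service capacity region is the single point $(0,0)$.
   Context: The recovering sets of each file are exactly the $2$-element subsets of the set of $C$ coded nodes (a single coded node cannot recover either file). Requests for $a$ and $b$ arrive at rates $\lambda_a,\lambda_b\ge0$. The service capacity region is the set of $(\lambda_a,\lambda_b)$ for which there exist nonnegative rates assigned to the recovering sets of $a$ summing to $\lambda_a$ and to the recovering sets of $b$ summing to $\lambda_b$, such that for every node the total rate assigned to recovering sets containing it is at most $\mu$. (Here the total number of nodes is $N=C$.) *)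

From mathcomp Require Import all_boot all_order all_algebra.
Set Implicit Arguments. Unset Strict Implicit. Unset Printing Implicit Defensive.
Import Order.TTheory GRing.Theory Num.Theory.
Local Open Scope ring_scope.

(* Storage system with C coded nodes (indexed by 'I_C), no systematic nodes.
   Recovering sets of file a and of file b: exactly the 2-element subsets of
   the node set. *)
Definition recovering (C : nat) (S : {set 'I_C}) : bool := #|S| == 2%N.

Definition in_capacity_region (R : realFieldType) (C : nat) (mu : R)
    (la lb : R) : Prop :=
  exists (xa xb : {set 'I_C} -> R),
    (forall S, recovering S -> 0 <= xa S) /\
    (forall S, recovering S -> 0 <= xb S) /\
    \sum_(S | recovering S) xa S = la /\
    \sum_(S | recovering S) xb S = lb /\
    (forall i : 'I_C,
       \sum_(S | recovering S && (i \in S)) xa S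
     + \sum_(S | recovering S && (i \in S)) xb S <= mu).

From mathcomp Require Import all_boot all_order all_algebra.

Set Implicit Arguments.
Unset Strict Implicit.
Unset Printing Implicit Defensive.
Import Order.TTheory GRing.Theory Num.Theory.
Local Open Scope ring_scope.

(* Every recovering set is a pair of nodes, so summing the load of all C
   nodes counts each rate twice: the total load is 2 (la + lb), and a load of
   at most mu per node forces la + lb <= C mu / 2.  Conversely, spreading la
   and lb uniformly over the C (C - 1) / 2 pairs puts a load of
   2 (la + lb) / C on every node, since each node lies in C - 1 pairs.  With
   C <= 1 there are no pairs at all, so only the zero demand is served. *)

Section PairsOfAFiniteType.

Variable T : finType.

Lemma sum_incident_card_eq (V : nmodType) (k : nat) (f : {set T} -> V) :
  \sum_(i : T) \sum_(S : {set T} | (#|S| == k) && (i \in S)) f S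
  = (\sum_(S : {set T} | #|S| == k) f S) *+ k.
Proof.
rewrite (exchange_big_dep (fun S : {set T} => #|S| == k)) /=; last first.
  by move=> i S _ /andP[].
rewrite -sumrMnl; apply: eq_bigr => S /eqP cardS.
by rewrite (eq_bigl (mem S)) ?sumr_const -?cardS // => i; rewrite eqxx.
Qed.

Lemma card_pairs : (#|[set S : {set T} | #|S| == 2]| * 2 = #|T| * #|T|.-1)%N.
Proof. by rewrite card_draws bin_ffact ffactnS ffactn1. Qed.

Lemma card_pairs_containing (i : T) :
  #|[set S : {set T} | (#|S| == 2) && (i \in S)]| = #|T|.-1.
Proof.
have pairs_with_i : [set S : {set T} | (#|S| == 2) && (i \in S)]
                    = (fun j => [set i; j]) @: [set~ i].
  apply/setP=> S; rewrite inE; apply/andP/imsetP.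
  - case=> /cards2P[x [y [neq_xy ->]]]; rewrite in_set2 => /orP[] /eqP ->.
      by exists y; rewrite // in_setC1 eq_sym.
    by exists x; rewrite ?in_setC1 // setUC.
  - case=> j; rewrite in_setC1 => neq_ji ->.
    by rewrite cards2 set21 [i == j]eq_sym neq_ji.
rewrite pairs_with_i card_in_imset ?cardsC1 // => j k.
rewrite !in_setC1 => neq_ji _ /setP/(_ j); rewrite !in_set2 eqxx (negbTE neq_ji).
by move/esym/eqP.
Qed.

Lemma no_pairs (S : {set T}) : (#|T| <= 1)%N -> #|S| != 2.
Proof. by move=> smallT; apply: contraTneq (leq_trans (max_card S) smallT) => ->. Qed.

End PairsOfAFiniteType.

Section CapacityRegion.

Variables (R : realFieldType) (C : nat) (mu : R).

Lemma sum_recovering_const (x : R) :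
  \sum_(S : {set 'I_C} | recovering S) x
  = x *+ #|[set S : {set 'I_C} | recovering S]|.
Proof. by rewrite -sumr_const; apply: eq_bigl => S; rewrite inE. Qed.

Lemma sum_recovering_containing_const (i : 'I_C) (x : R) :
  \sum_(S : {set 'I_C} | recovering S && (i \in S)) x = x *+ C.-1.
Proof.
rewrite -[C in C.-1]card_ord -(card_pairs_containing i) -sumr_const.
by apply: eq_bigl => S; rewrite inE.
Qed.

Lemma capacity_region_load (la lb : R) :
  in_capacity_region C mu la lb ->
  [/\ 0 <= la, 0 <= lb & (la + lb) *+ 2 <= mu *+ C].
Proof.
case=> xa [xb [xa_ge0 [xb_ge0 [<- [<- node_load]]]]].
split; [exact: sumr_ge0 | exact: sumr_ge0 |].
rewrite mulrnDl -!(sum_incident_card_eq 2) -big_split /=.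
by rewrite -[C in mu *+ C]card_ord -sumr_const; apply: ler_sum => i _.
Qed.

Lemma capacity_region_uniform (la lb : R) :
  (1 < C)%N -> 0 <= la -> 0 <= lb -> (la + lb) *+ 2 <= mu *+ C ->
  in_capacity_region C mu la lb.
Proof.
move=> C_gt1 la_ge0 lb_ge0 total_load.
set N := #|[set S : {set 'I_C} | recovering S]|.
have N_double : (N * 2 = C * C.-1)%N by rewrite card_pairs card_ord.
have N_neq0 : N%:R != 0 :> R.
  rewrite pnatr_eq0 -lt0n -(ltn_pmul2r (isT : 0 < 2)%N) mul0n N_double.
  by rewrite muln_gt0 -subn1 subn_gt0 C_gt1 ltnW.
exists (fun=> la / N%:R), (fun=> lb / N%:R).
do 2 (split; first by move=> S _; rewrite divr_ge0 ?ler0n).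
rewrite !sum_recovering_const -/N -!(mulr_natr (_ / _)) !mulfVK //.
do 2 split=> //; move=> i; rewrite !sum_recovering_containing_const -mulrnDl.
have C_gt0 : 0 < C%:R :> R by rewrite ltr0n ltnW.
rewrite -(ler_pM2r C_gt0) -[_ *+ C.-1]mulr_natr -mulrA -natrM mulnC -N_double natrM.
by rewrite -mulrDl mulrA mulfVK // !mulr_natr.
Qed.

Lemma capacity_region0 : 0 <= mu -> in_capacity_region C mu 0 0.
Proof.
move=> mu_ge0; exists (fun=> 0), (fun=> 0).
do 2 (split; first by []).
by do 2 (split; first by rewrite big1); move=> i; rewrite !big1 ?addr0.
Qed.

Lemma capacity_region_no_pairs (la lb : R) :
  (C <= 1)%N -> in_capacity_region C mu la lb -> la = 0 /\ lb = 0.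
Proof.
move=> C_le1 [xa [xb [_ [_ [<- [<- _]]]]]].
have no_recovering (S : {set 'I_C}) : recovering S = false.
  by apply: negbTE; apply: no_pairs; rewrite card_ord.
by split; apply: big_pred0.
Qed.

End CapacityRegion.

Theorem lemma4 (R : realFieldType) (C : nat) (mu : R) (hmu : 0 < mu) :
  ((1 < C)%N ->
    forall la lb : R,
      in_capacity_region C mu la lb <->
      [/\ 0 <= la, 0 <= lb & la + lb <= C%:R / 2 * mu])
  /\
  ((C <= 1)%N ->
    forall la lb : R,
      in_capacity_region C mu la lb <-> (la = 0 /\ lb = 0)).
Proof.
have half_bound (s : R) : (s <= C%:R / 2 * mu) = (s *+ 2 <= mu *+ C).
  by rewrite mulrAC ler_pdivlMr // mulr_natl mulr_natr.
split=> [C_gt1 | C_le1] la lb; split.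
- by case/capacity_region_load=> ? ? ?; rewrite half_bound.
- by case=> ? ?; rewrite half_bound; exact: capacity_region_uniform.
- exact: capacity_region_no_pairs.
- by case=> -> ->; apply/capacity_region0/ltW.
Qed.
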